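(* Let $L$ be a (right) Leibniz algebra and $B\neq\{0\}$ an ideal of $L$. Let $P_0=a_ma_{m-1}\cdots a_2a_1$ be a right product of elements $a_1,\dots,a_m\in L$ such that at least $n\geq 1$ of the factors $a_i$ belong to $B$. Then $P_0\in B_n$, where $B_1=B$ and $B_k=B^k+\mathrm{Es}(B)$ for $k\geq 2$.
   Context: A (right) Leibniz algebra is a vector space $L$ over a field $F$ (characteristic $\neq 2$, finite-dimensional) with a bilinear product $(x,y)\mapsto xy$ satisfying $x(yz)=(xy)z-(xz)y$ for all $x,y,z\in L$. For subspaces $U,V$, $UV$ is the span of all $uv$. An ideal is a subspace $B$ with $LB\subseteq B$, $BL\subseteq B$. Right powers: $B^1=B$, $B^{k+1}=B^kB$. $\mathrm{Ess}(L)$ is the ideal generated by all squares $xx$, and $\mathrm{Es}(B)=B\cap\mathrm{Ess}(L)$. Right product: $a_ma_{m-1}\cdots a_1:=((\cdots((a_ma_{m-1})a_{m-2})\cdots)a_2)a_1$. *)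

From HB Require Import structures.
From mathcomp Require Import all_boot all_order all_algebra.
Set Implicit Arguments. Unset Strict Implicit. Unset Printing Implicit Defensive.
Import GRing.Theory.
Local Open Scope ring_scope.

Section LeibnizDefs.
Variables (F : fieldType) (L : vectType F) (mul : L -> L -> L).

Definition bilinear_prod : Prop :=
  (forall (a : F) (x y z : L), mul (a *: x + y) z = a *: mul x z + mul y z) /\
  (forall (a : F) (x y z : L), mul z (a *: x + y) = a *: mul z x + mul z y).

Definition right_leibniz : Prop :=
  forall x y z : L, mul x (mul y z) = mul (mul x y) z - mul (mul x z) y.

Definition spanP (S : L -> Prop) : L -> Prop :=
  fun x => forall W : {vspace L}, (forall y, S y -> y \in W) -> x \in W.

Definition prodP (U V : L -> Prop) : L -> Prop :=
  spanP (fun z => exists u v, U u /\ V v /\ z = mul u v).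

Definition is_ideal (W : {vspace L}) : Prop :=
  forall x w, w \in W -> mul x w \in W /\ mul w x \in W.

Definition Ess : L -> Prop :=
  fun x => forall W : {vspace L}, is_ideal W -> (forall y, mul y y \in W) -> x \in W.

Definition Es (B : {vspace L}) : L -> Prop := fun x => x \in B /\ Ess x.

(* rpow B k = B^(k+1) : B^1 = B, B^(k+1) = B^k B. *)
Fixpoint rpow (B : {vspace L}) (k : nat) : L -> Prop :=
  match k with
  | 0 => fun x => x \in B
  | k'.+1 => prodP (rpow B k') (fun x => x \in B)
  end.

Definition Bpow (B : {vspace L}) (k : nat) : L -> Prop := rpow B k.-1.

Definition Bsub (B : {vspace L}) (k : nat) : L -> Prop :=
  fun x : L => if (k <= 1)%N then (x \in B : Prop)
  else (exists u v, Bpow B k u /\ Es B v /\ x = u + v).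

(* Right product a_m a_{m-1} ... a_1 = ((..(a_m a_{m-1})..)a_2)a_1,
   for factors indexed a 1, ..., a m. *)
Definition rprod (a : nat -> L) (m : nat) : L :=
  foldl (fun p i => mul p (a i)) (a m) (rev (iota 1 m.-1)).

End LeibnizDefs.

(* Right multiplication preserves every right power: in a right Leibniz
   algebra (uv)z = u(vz) + (uz)v, so by induction B^k L is contained in B^k.
   Peeling off the last factor a_1 of the right product, each factor lying in
   B raises the power by one, and the others keep it.  Hence P_0 lies in B^n,
   which is contained in B_n. *)
From HB Require Import structures.
From mathcomp Require Import all_boot all_order all_algebra.
Import GRing.Theory.
Local Open Scope ring_scope.

Lemma count_iotaS (p : pred nat) k :
  count p (iota 1 k.+1) = (p 1%N + count (fun i => p i.+1) (iota 1 k))%N.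
Proof. by rewrite /= -[2%N]/(1 + 1)%N iotaDl count_map. Qed.

Section Span.
Variables (F : fieldType) (L : vectType F).

Lemma linear_lfun (f : L -> L) : linear f -> exists g : 'End(L), g =1 f.
Proof.
move=> lin_f.
pose fL : {linear L -> L} := HB.pack f (GRing.isLinear.Build _ _ _ _ f lin_f).
by exists (linfun fL) => x; rewrite lfunE.
Qed.

Lemma spanP_mem (S : L -> Prop) x : S x -> spanP S x.
Proof. by move=> Sx W SW; apply: SW. Qed.

Lemma spanPD (S : L -> Prop) x y : spanP S x -> spanP S y -> spanP S (x + y).
Proof. by move=> Sx Sy W SW; apply: memvD; [apply: Sx | apply: Sy]. Qed.

Lemma spanP_linear (S T : L -> Prop) (f : L -> L) x : linear f ->
  (forall y, S y -> spanP T (f y)) -> spanP S x -> spanP T (f x).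
Proof.
move=> /linear_lfun [g gf] fST Sx W TW.
rewrite -gf memv_preim; apply: Sx => y Sy.
by rewrite -memv_preim gf; apply: fST.
Qed.

End Span.

Section RightPowers.
Variables (F : fieldType) (L : vectType F) (mul : L -> L -> L).
Hypothesis mul_bilinear : bilinear_prod mul.
Hypothesis mul_leibniz : right_leibniz mul.
Variable B : {vspace L}.
Hypothesis B_ideal : is_ideal mul B.

Lemma linear_mulr (z : L) : linear (fun x => mul x z).
Proof. by move=> c x y; rewrite /= mul_bilinear.1. Qed.

Lemma rpow_mulr k x z : rpow mul B k x -> rpow mul B k (mul x z).
Proof.
elim: k x => [|k IHk] x /=; first by move=> /(B_ideal z x) [].
apply: spanP_linear (linear_mulr z) _ => _ [u [v [uBk [vB ->]]]].
have -> : mul (mul u v) z = mul u (mul v z) + mul (mul u z) v.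
  by rewrite mul_leibniz subrK.
apply: spanPD; apply: spanP_mem.
  by exists u, (mul v z); split=> //; split=> //; have [] := B_ideal z v vB.
by exists (mul u z), v; split=> //; apply: IHk.
Qed.

Lemma rpow_mulS k x b : rpow mul B k x -> b \in B -> rpow mul B k.+1 (mul x b).
Proof. by move=> xBk bB; apply: spanP_mem; exists x, b. Qed.

Lemma rprodS (a : nat -> L) k :
  rprod mul a k.+2 = mul (rprod mul (fun i => a i.+1) k.+1) (a 1%N).
Proof.
rewrite /rprod /= rev_cons foldl_rcons; congr mul.
rewrite -[2%N]/(1 + 1)%N iotaDl -map_rev.
by elim: (rev _) (a k.+2) => //= i s IHs p; rewrite IHs.
Qed.

(* The exponent is shifted: [rpow B j] is B^(j+1). *)
Lemma rprod_rpow (a : nat -> L) k j :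
  (j < count (fun i => a i \in B) (iota 1 k.+1))%N -> rpow mul B j (rprod mul a k.+1).
Proof.
elim: k a j => [|k IHk] a j.
  by rewrite /= addn0; case: j => [|j]; case aB: (a 1%N \in B).
rewrite count_iotaS rprodS; case aB: (a 1%N \in B); last first.
  by rewrite add0n => jlt; apply: rpow_mulr; apply: IHk.
case: j => [_ | j]; first by have [] := B_ideal (rprod mul (fun i => a i.+1) k.+1) _ aB.
by rewrite add1n ltnS => jlt; apply: rpow_mulS => //; apply: IHk.
Qed.

Lemma Bpow_Bsub n x : Bpow mul B n x -> Bsub mul B n x.
Proof.
rewrite /Bsub /Bpow; case: n => [|[|n]] //= xBn.
exists x, 0; rewrite addr0; do !split=> //; first exact: mem0v.
by move=> W _ _; exact: mem0v.
Qed.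

End RightPowers.

Theorem lemma4p2 (F : fieldType) (L : vectType F) (mul : L -> L -> L)
  (hchar : (2 \notin [pchar F])%N)
  (hbil : bilinear_prod mul) (hleib : right_leibniz mul)
  (B : {vspace L}) (hB : is_ideal mul B) (hB0 : B != 0%VS)
  (m n : nat) (a : nat -> L) (hn : (1 <= n)%N)
  (hcount : (n <= count (fun i => a i \in B) (iota 1 m))%N) :
  Bsub mul B n (rprod mul a m).
Proof.
apply: Bpow_Bsub; rewrite /Bpow.
case: m hcount => [|m] hcount; first by have := leq_trans hn hcount.
by apply: rprod_rpow => //; rewrite prednK.
Qed.
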